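(* Let $(M,g,h)$ be a $4$-dimensional smooth metric measure spacetime which is a solution of the vacuum weighted Einstein field equations $h\rho-\operatorname{Hes}_h+\Delta h\, g=0$, such that $(M,g)$ is non-flat and is a $pr$-wave with metric $g=2\,du\,dv+F(u,v,x,y)\,dv^2+dx^2+dy^2$ in local coordinates $(u,v,x,y)$. Then the Ricci operator is nilpotent, and the density function $h$ takes the form \[ h(v,x,y)=h_x(v)x+h_y(v)y+h_0(v), \] while $F$ is given by \[ F(u,v,x,y)=F_1(v,x,y)u+F_0(v,x,y), \] for suitable smooth functions $h_x,h_y,h_0,F_1,F_0$.
   Context: A smooth metric measure spacetime is a triple $(M,g,h)$ (shorthand for $(M,g,h\,dvol_g)$) where $(M,g)$ is a Lorentzian manifold and $h$ is a positive smooth function on $M$, assumed non-constant on any open subset (so $\nabla h\neq0$). The weighted Einstein tensor is $G^h=h\rho-\operatorname{Hes}_h+\Delta h\, g$, where $\rho$ is the Ricci tensor, $\operatorname{Hes}_h$ the Hessian and $\Delta h$ the Laplacian of $h$; $(M,g,h)$ is a solution of the vacuum weighted Einstein field equations if $G^h=0$ on $M$. The Ricci operator $\operatorname{Ric}$ is the $(1,1)$-tensor with $g(\operatorname{Ric}X,Y)=\rho(X,Y)$. A $pr$-wave is a Lorentzian manifold admitting a recurrent lightlike vector field $V$ (i.e. $\nabla_XV=\omega(X)V$ for some $1$-form $\omega$) such that $R(V^\perp,V^\perp,\cdot,\cdot)=0$; in dimension $4$ it admits local coordinates $(u,v,x,y)$ with $g=2\,du\,dv+F(u,v,x,y)\,dv^2+dx^2+dy^2$.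 *)

From Stdlib Require Import Reals Lra Lia List.
From Coquelicot Require Import Coquelicot.
Open Scope R_scope.

(* Points of the coordinate domain in R^4, coordinates (u,v,x,y) = indices 0,1,2,3. *)
Definition pt : Type := (R * R * R * R)%type.

Definition coord (i : nat) (p : pt) : R :=
  match p with (u, v, x, y) =>
    match i with 0%nat => u | 1%nat => v | 2%nat => x | _ => y end end.

Definition upd (i : nat) (p : pt) (t : R) : pt :=
  match p with (u, v, x, y) =>
    match i with
    | 0%nat => (t, v, x, y) | 1%nat => (u, t, x, y)
    | 2%nat => (u, v, t, y) | _ => (u, v, x, t) end end.

Definition partial (i : nat) (f : pt -> R) (p : pt) : R :=
  Derive (fun t => f (upd i p t)) (coord i p).

Definition sum4 (f : nat -> R) : R := f 0%nat + f 1%nat + f 2%nat + f 3%nat.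

Fixpoint dpart (l : list nat) (f : pt -> R) : pt -> R :=
  match l with nil => f | i :: l' => partial i (dpart l' f) end.

Definition box (p : pt) (eps : R) (q : pt) : Prop :=
  forall i, (i < 4)%nat -> Rabs (coord i q - coord i p) < eps.

Definition is_open (U : pt -> Prop) : Prop :=
  forall p, U p -> exists eps, 0 < eps /\ forall q, box p eps q -> U q.

Definition cont_at (f : pt -> R) (p : pt) : Prop :=
  forall eps, 0 < eps -> exists d, 0 < d /\
    forall q, box p d q -> Rabs (f q - f p) < eps.

Definition smooth_on (U : pt -> Prop) (f : pt -> R) : Prop :=
  forall (l : list nat) (p : pt), List.Forall (fun i => (i < 4)%nat) l -> U p ->
    cont_at (dpart l f) p /\
    forall i, (i < 4)%nat -> ex_derive (fun t => dpart l f (upd i p t)) (coord i p).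

(* A metric is given by its components g i j and inverse components gi i j. *)
Definition metric := nat -> nat -> pt -> R.

Definition Gam (g gi : metric) (k i j : nat) (p : pt) : R :=
  / 2 * sum4 (fun l => gi k l p *
     (partial i (g j l) p + partial j (g i l) p - partial l (g i j) p)).

(* R(d_i, d_j) d_k = Riem l i j k * d_l,  R(X,Y)=[nabla_X,nabla_Y]-nabla_[X,Y] *)
Definition Riem (g gi : metric) (l i j k : nat) (p : pt) : R :=
  partial i (Gam g gi l j k) p - partial j (Gam g gi l i k) p
  + sum4 (fun m => Gam g gi l i m p * Gam g gi m j k p
                   - Gam g gi l j m p * Gam g gi m i k p).

Definition ricci (g gi : metric) (j k : nat) (p : pt) : R :=
  sum4 (fun i => Riem g gi i i j k p).

Definition ricci_op (g gi : metric) (k j : nat) (p : pt) : R :=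
  sum4 (fun l => gi k l p * ricci g gi l j p).

Definition hess (g gi : metric) (h : pt -> R) (i j : nat) (p : pt) : R :=
  partial i (partial j h) p - sum4 (fun k => Gam g gi k i j p * partial k h p).

Definition lap (g gi : metric) (h : pt -> R) (p : pt) : R :=
  sum4 (fun i => sum4 (fun j => gi i j p * hess g gi h i j p)).

Definition weinstein (g gi : metric) (h : pt -> R) (i j : nat) (p : pt) : R :=
  h p * ricci g gi i j p - hess g gi h i j p + lap g gi h p * g i j p.

Definition flat_on (g gi : metric) (V : pt -> Prop) : Prop :=
  forall p, V p -> forall l i j k, (l < 4)%nat -> (i < 4)%nat -> (j < 4)%nat -> (k < 4)%nat ->
    Riem g gi l i j k p = 0.

Definition prwave (F : pt -> R) : metric := fun i j p =>
  match i, j with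
  | 0%nat, 1%nat | 1%nat, 0%nat => 1
  | 1%nat, 1%nat => F p
  | 2%nat, 2%nat | 3%nat, 3%nat => 1
  | _, _ => 0 end.

Definition prwave_inv (F : pt -> R) : metric := fun i j p =>
  match i, j with
  | 0%nat, 0%nat => - F p
  | 0%nat, 1%nat | 1%nat, 0%nat => 1
  | 2%nat, 2%nat | 3%nat, 3%nat => 1
  | _, _ => 0 end.

Lemma prwave_inv_correct (F : pt -> R) (p : pt) (i j : nat) :
  (i < 4)%nat -> (j < 4)%nat ->
  sum4 (fun k => prwave F i k p * prwave_inv F k j p) = if Nat.eqb i j then 1 else 0.
Proof.
  intros Hi Hj; unfold sum4, prwave, prwave_inv.
  destruct i as [|[|[|[|i]]]]; try lia;
  destruct j as [|[|[|[|j]]]]; try lia; simpl; ring.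
Qed.

Definition mat := nat -> nat -> R.
Definition mmul (A B : mat) : mat := fun i j => sum4 (fun k => A i k * B k j).
Fixpoint mpow (A : mat) (n : nat) : mat :=
  match n with
  | 0%nat => fun i j => if Nat.eqb i j then 1 else 0
  | S n' => mmul A (mpow A n') end.
Definition nilpotent (A : mat) : Prop :=
  exists n, forall i j, (i < 4)%nat -> (j < 4)%nat -> mpow A n i j = 0.

(* In the coordinates (u,v,x,y) the Christoffel symbols of g involve only F and its first
   derivatives, so G^h = 0 is an explicit system of PDEs.  Its components give
   h_uu = h_ux = h_uy = h_xy = 0, h_xx = h_yy = F_u h_u - 2 h_vu and h F_uu = 6 h_vu - 3 F_u h_u.
   Differentiating the equation for h_xx in u yields F_uu h_u = 0; on an open set where F_uu <> 0
   this forces h_u = h_vu = 0 and then h F_uu = 0, impossible as h > 0.  Hence F_uu = 0, which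
   makes the Ricci operator strictly triangular, and the equations become h_vu = F_u h_u / 2,
   h_xx = h_yy = 0.  If h_u <> 0 on an open set, differentiating h_vu = F_u h_u / 2 and
   h_vx = F_x h_u / 2, h_vy = F_y h_u / 2 in x and y kills all second derivatives of F in the
   directions u, x, y, so g is flat there; hence h_u = 0.  The local forms follow by integrating
   the vanishing second derivatives along coordinate lines. *)

From Stdlib Require Import Reals List Lra Lia.
From Coquelicot Require Import Coquelicot.
Open Scope R_scope.

Ltac destruct_pt p := destruct p as [[[?u ?v] ?x] ?y].
Ltac case_index i := destruct i as [|[|[|[|i]]]]; try lia.

Lemma coord_upd_same i p t : coord i (upd i p t) = t.
Proof. destruct_pt p; case_index i; reflexivity. Qed.

Lemma coord_upd_other i j p t : i <> j -> (i < 4)%nat -> (j < 4)%nat ->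
  coord j (upd i p t) = coord j p.
Proof. destruct_pt p; intros; case_index i; case_index j; reflexivity. Qed.

Lemma upd_upd_same i p s t : upd i (upd i p s) t = upd i p t.
Proof. destruct_pt p; case_index i; reflexivity. Qed.

Lemma upd_coord i p : upd i p (coord i p) = p.
Proof. destruct_pt p; case_index i; reflexivity. Qed.

Lemma upd_comm i j p s t : i <> j -> (i < 4)%nat -> (j < 4)%nat ->
  upd i (upd j p t) s = upd j (upd i p s) t.
Proof. destruct_pt p; intros; case_index i; case_index j; reflexivity. Qed.

Definition ex_partial (f : pt -> R) (i : nat) (p : pt) : Prop :=
  ex_derive (fun t => f (upd i p t)) (coord i p).

Lemma partial_ext f g i p : (forall q, f q = g q) -> partial i f p = partial i g p.
Proof. intros H. unfold partial. apply Derive_ext. intros t. apply H. Qed.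

Lemma partial_const i c p : partial i (fun _ => c) p = 0.
Proof. unfold partial. apply Derive_const. Qed.

Lemma partial_scal i c f p : partial i (fun q => c * f q) p = c * partial i f p.
Proof. unfold partial. apply Derive_scal. Qed.

Lemma partial_plus i f g p : ex_partial f i p -> ex_partial g i p ->
  partial i (fun q => f q + g q) p = partial i f p + partial i g p.
Proof. unfold partial. apply Derive_plus. Qed.

Lemma partial_minus i f g p : ex_partial f i p -> ex_partial g i p ->
  partial i (fun q => f q - g q) p = partial i f p - partial i g p.
Proof. unfold partial. apply Derive_minus. Qed.

Lemma partial_mult i f g p : ex_partial f i p -> ex_partial g i p ->
  partial i (fun q => f q * g q) p = partial i f p * g p + f p * partial i g p.
Proof.
  intros Hf Hg. unfold partial. rewrite Derive_mult by assumption.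
  rewrite !upd_coord. ring.
Qed.

Lemma ex_partial_plus i f g p : ex_partial f i p -> ex_partial g i p ->
  ex_partial (fun q => f q + g q) i p.
Proof. intros Hf Hg. exact (ex_derive_plus _ _ _ Hf Hg). Qed.

Lemma ex_partial_scal i c f p : ex_partial f i p -> ex_partial (fun q => c * f q) i p.
Proof. intros Hf. exact (ex_derive_scal _ c _ Hf). Qed.

Lemma ex_partial_mult i f g p : ex_partial f i p -> ex_partial g i p ->
  ex_partial (fun q => f q * g q) i p.
Proof. intros Hf Hg. exact (ex_derive_mult _ _ _ Hf Hg). Qed.

Lemma Derive_upd f i r z : Derive (fun t => f (upd i r t)) z = partial i f (upd i r z).
Proof.
  unfold partial. rewrite coord_upd_same.
  apply Derive_ext. intros t. now rewrite upd_upd_same.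
Qed.

Lemma ex_derive_upd f i r z : ex_partial f i (upd i r z) -> ex_derive (fun t => f (upd i r t)) z.
Proof.
  unfold ex_partial. rewrite coord_upd_same.
  apply ex_derive_ext. intros t. now rewrite upd_upd_same.
Qed.

Lemma box_center p e : 0 < e -> box p e p.
Proof. intros He i _. now rewrite Rminus_diag, Rabs_R0. Qed.

Lemma box_upd p e q i t : box p e q -> Rabs (t - coord i p) < e -> (i < 4)%nat ->
  box p e (upd i q t).
Proof.
  intros Hq Ht Hi j Hj. destruct (Nat.eq_dec i j) as [<-|Hij].
  - now rewrite coord_upd_same.
  - rewrite coord_upd_other by assumption. now apply Hq.
Qed.

Lemma box_upd_center p e q i : 0 < e -> box p e q -> (i < 4)%nat ->
  box p e (upd i q (coord i p)).
Proof. intros He Hq Hi. apply box_upd; auto. now rewrite Rminus_diag, Rabs_R0. Qed.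

Lemma box_mono p d e q : d <= e -> box p d q -> box p e q.
Proof. intros Hde Hq i Hi. specialize (Hq i Hi). lra. Qed.

Lemma box_open p e : is_open (box p e).
Proof.
  intros q Hq.
  set (m := fun j => e - Rabs (coord j q - coord j p)).
  set (d := Rmin (Rmin (m 0%nat) (m 1%nat)) (Rmin (m 2%nat) (m 3%nat))).
  assert (Hd : forall j, (j < 4)%nat -> d <= m j).
  { intros j Hj. unfold d.
    case_index j; unfold Rmin; repeat destruct Rle_dec; lra. }
  exists d. split.
  - unfold d. repeat apply Rmin_pos; unfold m;
      match goal with |- 0 < e - Rabs (coord ?j _ - _) => specialize (Hq j ltac:(lia)) end; lra.
  - intros r Hr j Hj. specialize (Hr j Hj). specialize (Hd j Hj). unfold m in Hd.
    replace (coord j r - coord j p)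
      with ((coord j r - coord j q) + (coord j q - coord j p)) by ring.
    eapply Rle_lt_trans; [apply Rabs_triang | lra].
Qed.

Lemma locally_upd p e i (P : pt -> Prop) : 0 < e -> (i < 4)%nat ->
  (forall q, box p e q -> P q) -> locally (coord i p) (fun t => P (upd i p t)).
Proof.
  intros He Hi H. exists (mkposreal e He). intros t Ht. apply H.
  apply box_upd; [apply box_center | exact Ht | ]; assumption.
Qed.

Lemma partial_ext_open (V : pt -> Prop) f g i p : is_open V -> V p -> (i < 4)%nat ->
  (forall q, V q -> f q = g q) -> partial i f p = partial i g p.
Proof.
  intros HV Hp Hi H. destruct (HV p Hp) as [e [He Hb]].
  unfold partial. apply Derive_ext_loc. apply (locally_upd p e i (fun q => f q = g q)); auto.
Qed.

Lemma partial_eq0_open (V : pt -> Prop) f i p : is_open V -> V p -> (i < 4)%nat ->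
  (forall q, V q -> f q = 0) -> partial i f p = 0.
Proof.
  intros. rewrite (partial_ext_open V f (fun _ => 0) i p) by assumption.
  apply partial_const.
Qed.

Lemma partial_scal_mult_open (V : pt -> Prop) c f g1 g2 i p : is_open V -> V p -> (i < 4)%nat ->
  (forall q, V q -> f q = c * (g1 q * g2 q)) -> ex_partial g1 i p -> ex_partial g2 i p ->
  partial i f p = c * (partial i g1 p * g2 p + g1 p * partial i g2 p).
Proof.
  intros HV Hp Hi Hf H1 H2.
  rewrite (partial_ext_open V f (fun q => c * (g1 q * g2 q)) i p) by assumption.
  now rewrite partial_scal, partial_mult.
Qed.

Lemma nonzero_box (U : pt -> Prop) f p : is_open U -> U p -> cont_at f p -> f p <> 0 ->
  exists e, 0 < e /\ forall q, box p e q -> U q /\ f q <> 0.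
Proof.
  intros HU Hp Hf Hfp.
  destruct (Hf (Rabs (f p)) (Rabs_pos_lt _ Hfp)) as [d [Hd Hfd]].
  destruct (HU p Hp) as [e [He HeU]].
  exists (Rmin d e). split; [now apply Rmin_pos|].
  intros q Hq. split.
  - apply HeU. exact (box_mono p _ _ q (Rmin_r d e) Hq).
  - intros Hfq. specialize (Hfd q (box_mono p _ _ q (Rmin_l d e) Hq)).
    rewrite Hfq, Rminus_0_l, Rabs_Ropp in Hfd. lra.
Qed.

Lemma dpart_app l l' f : dpart l' (dpart l f) = dpart (l' ++ l) f.
Proof. induction l' as [|i l' IH]; simpl; [reflexivity | now rewrite IH]. Qed.

Lemma smooth_partial (U : pt -> Prop) f i : smooth_on U f -> (i < 4)%nat ->
  smooth_on U (partial i f).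
Proof.
  intros Hf Hi l p Hl Hp. change (partial i f) with (dpart (i :: nil) f).
  rewrite dpart_app. apply Hf; [apply Forall_app; auto | exact Hp].
Qed.

Lemma smooth_ex_partial (U : pt -> Prop) f i p : smooth_on U f -> U p -> (i < 4)%nat ->
  ex_partial f i p.
Proof. intros Hf Hp Hi. now apply (Hf nil p). Qed.

Lemma smooth_cont (U : pt -> Prop) f p : smooth_on U f -> U p -> cont_at f p.
Proof. intros Hf Hp. now apply (Hf nil p). Qed.

Lemma smooth_mono (U V : pt -> Prop) f : (forall p, V p -> U p) -> smooth_on U f -> smooth_on V f.
Proof. intros HVU Hf l p Hl Hp. apply Hf; auto. Qed.

Lemma Derive_upd_comm f i j p u v : i <> j -> (i < 4)%nat -> (j < 4)%nat ->
  Derive (fun t => f (upd i (upd j p t) u)) v = partial j f (upd i (upd j p v) u).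
Proof.
  intros Hij Hi Hj. rewrite !upd_comm by assumption. rewrite <- Derive_upd.
  apply Derive_ext. intros t. now rewrite upd_comm.
Qed.

Lemma ex_derive_upd_comm f i j p u v : i <> j -> (i < 4)%nat -> (j < 4)%nat ->
  ex_partial f j (upd i (upd j p v) u) -> ex_derive (fun t => f (upd i (upd j p t) u)) v.
Proof.
  intros Hij Hi Hj. rewrite upd_comm by assumption. intros H.
  apply (ex_derive_ext (fun t => f (upd j (upd i p u) t))); [|now apply ex_derive_upd].
  intros t. now rewrite upd_comm.
Qed.

Lemma continuity_2d_upd g i j p : i <> j -> (i < 4)%nat -> (j < 4)%nat -> cont_at g p ->
  continuity_2d_pt (fun u v => g (upd i (upd j p v) u)) (coord i p) (coord j p).
Proof.
  intros Hij Hi Hj Hg eps. destruct (Hg eps (cond_pos eps)) as [d [Hd Hgd]].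
  exists (mkposreal d Hd). intros u v Hu Hv. rewrite !upd_coord.
  apply Hgd, box_upd; [apply box_upd; [apply box_center|..]|..]; assumption.
Qed.

Lemma partial_comm (U : pt -> Prop) f i j p : is_open U -> smooth_on U f -> U p ->
  (i < 4)%nat -> (j < 4)%nat -> partial i (partial j f) p = partial j (partial i f) p.
Proof.
  intros HU Hf Hp Hi Hj. destruct (Nat.eq_dec i j) as [<-|Hij]; [reflexivity|].
  set (s u v := upd i (upd j p v) u).
  assert (Hfj := smooth_partial U f j Hf Hj).
  assert (Hfi := smooth_partial U f i Hf Hi).
  assert (Dij : forall u v, Derive (fun z => Derive (fun t => f (s z t)) v) u
                            = partial i (partial j f) (s u v)).
  { intros u v. unfold s. rewrite <- Derive_upd.
    apply Derive_ext. intros z. apply Derive_upd_comm; auto. }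
  assert (Dji : forall u v, Derive (fun z => Derive (fun t => f (s t z)) u) v
                            = partial j (partial i f) (s u v)).
  { intros u v. unfold s. rewrite <- Derive_upd_comm by auto.
    apply Derive_ext. intros z. apply Derive_upd. }
  pose proof (Schwarz (fun u v => f (s u v)) (coord i p) (coord j p)) as Sch.
  rewrite Dij, Dji in Sch. unfold s in Sch. rewrite !upd_coord in Sch. apply Sch; clear Sch.
  - destruct (HU p Hp) as [e [He HeU]]. exists (mkposreal e He). intros u v Hu Hv.
    assert (Hs : U (s u v)).
    { apply HeU, box_upd; [apply box_upd; [apply box_center|..]|..]; assumption. }
    repeat split.
    + apply ex_derive_upd. now apply (smooth_ex_partial U).
    + apply ex_derive_upd_comm; auto. now apply (smooth_ex_partial U).
    + apply (ex_derive_ext (fun z => partial j f (s z v))).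
      { intros z. symmetry. apply Derive_upd_comm; auto. }
      apply ex_derive_upd. now apply (smooth_ex_partial U).
    + apply (ex_derive_ext (fun z => partial i f (s u z))).
      { intros z. symmetry. apply Derive_upd. }
      apply ex_derive_upd_comm; auto. now apply (smooth_ex_partial U).
  - apply (continuity_2d_pt_ext (fun u v => partial i (partial j f) (s u v))).
    { intros u v. now rewrite Dij. }
    apply continuity_2d_upd; auto. apply (smooth_cont U); [now apply smooth_partial | exact Hp].
  - apply (continuity_2d_pt_ext (fun u v => partial j (partial i f) (s u v))).
    { intros u v. now rewrite Dji. }
    apply continuity_2d_upd; auto. apply (smooth_cont U); [now apply smooth_partial | exact Hp].
Qed.

Lemma cont_at_plus f g p : cont_at f p -> cont_at g p -> cont_at (fun q => f q + g q) p.
Proof.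
  intros Hf Hg eps Heps.
  destruct (Hf (eps / 2) ltac:(lra)) as [d1 [Hd1 Hf1]].
  destruct (Hg (eps / 2) ltac:(lra)) as [d2 [Hd2 Hg2]].
  exists (Rmin d1 d2). split; [now apply Rmin_pos|]. intros q Hq.
  specialize (Hf1 q (box_mono p _ _ q (Rmin_l d1 d2) Hq)).
  specialize (Hg2 q (box_mono p _ _ q (Rmin_r d1 d2) Hq)).
  replace (f q + g q - (f p + g p)) with ((f q - f p) + (g q - g p)) by ring.
  eapply Rle_lt_trans; [apply Rabs_triang | lra].
Qed.

Lemma cont_at_scal c f p : cont_at f p -> cont_at (fun q => c * f q) p.
Proof.
  intros Hf eps Heps.
  assert (Hc : 0 < Rabs c + 1) by (pose proof (Rabs_pos c); lra).
  destruct (Hf (eps / (Rabs c + 1)) ltac:(now apply Rdiv_lt_0_compat)) as [d [Hd Hfd]].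
  exists d. split; [exact Hd|]. intros q Hq. specialize (Hfd q Hq).
  rewrite <- Rmult_minus_distr_l, Rabs_mult.
  apply (Rle_lt_trans _ ((Rabs c + 1) * Rabs (f q - f p))).
  - apply Rmult_le_compat_r; [apply Rabs_pos | lra].
  - apply (Rmult_lt_compat_l (Rabs c + 1)) in Hfd; [|exact Hc].
    unfold Rdiv in Hfd. rewrite (Rmult_comm eps), <- Rmult_assoc, Rinv_r, Rmult_1_l in Hfd; lra.
Qed.

Lemma dpart_scal c f l q : dpart l (fun r => c * f r) q = c * dpart l f q.
Proof.
  revert q. induction l as [|i l IH]; intros q; simpl; [reflexivity|].
  rewrite <- partial_scal. apply partial_ext, IH.
Qed.

Lemma dpart_plus (V : pt -> Prop) f g l q : is_open V -> smooth_on V f -> smooth_on V g ->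
  List.Forall (fun i => (i < 4)%nat) l -> V q ->
  dpart l (fun r => f r + g r) q = dpart l f q + dpart l g q.
Proof.
  intros HV Hf Hg Hl. revert q. induction Hl as [|i l Hi Hl IH]; intros q Hq; simpl; [reflexivity|].
  rewrite (partial_ext_open V _ (fun r => dpart l f r + dpart l g r) i q HV Hq Hi) by auto.
  apply partial_plus; [apply (Hf l q Hl Hq) | apply (Hg l q Hl Hq)]; exact Hi.
Qed.

Lemma cont_at_ext_open (V : pt -> Prop) f g p : is_open V -> V p ->
  (forall q, V q -> f q = g q) -> cont_at f p -> cont_at g p.
Proof.
  intros HV Hp Hfg Hf eps Heps.
  destruct (HV p Hp) as [e [He HeV]]. destruct (Hf eps Heps) as [d [Hd Hfd]].
  exists (Rmin d e). split; [now apply Rmin_pos|]. intros q Hq.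
  rewrite <- !Hfg by (auto; apply HeV; exact (box_mono p _ _ q (Rmin_r d e) Hq)).
  exact (Hfd q (box_mono p _ _ q (Rmin_l d e) Hq)).
Qed.

Lemma smooth_scal (V : pt -> Prop) c f : is_open V -> smooth_on V f ->
  smooth_on V (fun q => c * f q).
Proof.
  intros HV Hf l q Hl Hq. destruct (Hf l q Hl Hq) as [Hc Hd]. split.
  - apply (cont_at_ext_open V (fun r => c * dpart l f r)); auto.
    + intros r _. symmetry. apply dpart_scal.
    + now apply cont_at_scal.
  - intros i Hi. apply (ex_derive_ext (fun t => c * dpart l f (upd i q t))).
    + intros t. symmetry. apply dpart_scal.
    + exact (ex_partial_scal i c _ q (Hd i Hi)).
Qed.

Lemma smooth_plus (V : pt -> Prop) f g : is_open V -> smooth_on V f -> smooth_on V g ->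
  smooth_on V (fun q => f q + g q).
Proof.
  intros HV Hf Hg l q Hl Hq.
  destruct (Hf l q Hl Hq) as [Hfc Hfd]. destruct (Hg l q Hl Hq) as [Hgc Hgd].
  assert (E : forall r, V r -> dpart l f r + dpart l g r = dpart l (fun r => f r + g r) r).
  { intros r Hr. symmetry. now apply (dpart_plus V). }
  split.
  - apply (cont_at_ext_open V (fun r => dpart l f r + dpart l g r)); auto.
    now apply cont_at_plus.
  - intros i Hi. destruct (HV q Hq) as [e [He HeV]].
    apply (@ex_derive_ext_loc R_AbsRing R_NormedModule
             (fun t => dpart l f (upd i q t) + dpart l g (upd i q t))).
    + apply (locally_upd q e i
               (fun r => dpart l f r + dpart l g r = dpart l (fun r => f r + g r) r)); auto.
    + exact (ex_partial_plus i _ _ q (Hfd i Hi) (Hgd i Hi)).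
Qed.

Definition proj (k : nat -> bool) (p q : pt) : pt :=
  (if k 0%nat then coord 0 q else coord 0 p, if k 1%nat then coord 1 q else coord 1 p,
   if k 2%nat then coord 2 q else coord 2 p, if k 3%nat then coord 3 q else coord 3 p).

Definition only_v (i : nat) : bool := Nat.eqb i 1.
Definition all_but_u (i : nat) : bool := negb (Nat.eqb i 0).

Lemma coord_proj k p q i : (i < 4)%nat ->
  coord i (proj k p q) = if k i then coord i q else coord i p.
Proof. intros Hi. now case_index i. Qed.

Lemma proj_upd k p q i t : (i < 4)%nat ->
  proj k p (upd i q t) = if k i then upd i (proj k p q) t else proj k p q.
Proof.
  intros Hi. destruct_pt q. unfold proj.
  case_index i; simpl; destruct (k 0%nat), (k 1%nat), (k 2%nat), (k 3%nat); reflexivity.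
Qed.

Lemma box_proj k p e q : 0 < e -> box p e q -> box p e (proj k p q).
Proof.
  intros He Hq j Hj. rewrite coord_proj by exact Hj. destruct (k j).
  - now apply Hq.
  - now rewrite Rminus_diag, Rabs_R0.
Qed.

Lemma dpart_proj k p f l q : List.Forall (fun i => (i < 4)%nat) l ->
  dpart l (fun r => f (proj k p r)) q = if forallb k l then dpart l f (proj k p q) else 0.
Proof.
  intros Hl. revert q. induction Hl as [|i l Hi Hl IH]; intros q; simpl; [reflexivity|].
  unfold partial at 1.
  rewrite (Derive_ext _ (fun t => if forallb k l then dpart l f (proj k p (upd i q t)) else 0))
    by (intros; apply IH).
  destruct (forallb k l); [|destruct (k i); apply Derive_const].
  rewrite (Derive_ext _ (fun t => if k i then dpart l f (upd i (proj k p q) t)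
                                  else dpart l f (proj k p q)))
    by (intros; rewrite proj_upd by exact Hi; now destruct (k i)).
  destruct (k i) eqn:Hki; simpl; [|apply Derive_const].
  unfold partial. now rewrite coord_proj, Hki.
Qed.

Lemma smooth_proj (U B : pt -> Prop) f k p : smooth_on U f ->
  (forall q, B q -> U (proj k p q)) -> smooth_on B (fun r => f (proj k p r)).
Proof.
  intros Hf HBU l q Hl Hq.
  destruct (Hf l (proj k p q) Hl (HBU q Hq)) as [Hc Hd].
  split.
  - intros eps Heps. destruct (forallb k l) eqn:Hkl.
    + destruct (Hc eps Heps) as [d [Hpos Hdelta]]. exists d. split; [exact Hpos|].
      intros q' Hq'. rewrite !dpart_proj, Hkl by exact Hl. apply Hdelta.
      intros j Hj. rewrite !coord_proj by exact Hj. destruct (k j).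
      * now apply Hq'.
      * now rewrite Rminus_diag, Rabs_R0.
    + exists 1. split; [lra|]. intros q' _. rewrite !dpart_proj, Hkl by exact Hl.
      now rewrite Rminus_diag, Rabs_R0.
  - intros i Hi.
    apply (ex_derive_ext (fun t => if forallb k l then dpart l f (proj k p (upd i q t)) else 0));
      [intros; symmetry; now apply dpart_proj|].
    destruct (forallb k l); [|apply ex_derive_const].
    apply (ex_derive_ext (fun t => if k i then dpart l f (upd i (proj k p q) t)
                                   else dpart l f (proj k p q)));
      [intros; rewrite proj_upd by exact Hi; now destruct (k i)|].
    destruct (k i) eqn:Hki; [|apply ex_derive_const].
    specialize (Hd i Hi). now rewrite coord_proj, Hki in Hd.
Qed.

Lemma affine_on_line p e f i r c t : (i < 4)%nat -> box p e r -> Rabs (t - coord i p) < e ->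
  (forall s, Rabs (s - coord i p) < e ->
     ex_partial f i (upd i r s) /\ partial i f (upd i r s) = c) ->
  f (upd i r t) = f r + c * (t - coord i r).
Proof.
  intros Hi Hr Ht Hline.
  set (g s := f (upd i r s) - c * s).
  assert (Hseg : forall s, Rmin (coord i r) t <= s <= Rmax (coord i r) t ->
                           Rabs (s - coord i p) < e).
  { intros s Hs. specialize (Hr i Hi). apply Rabs_def2 in Hr. apply Rabs_def2 in Ht.
    apply Rabs_def1; unfold Rmin, Rmax in Hs; destruct Rle_dec; lra. }
  assert (Hg : forall s, Rabs (s - coord i p) < e -> is_derive g s 0).
  { intros s Hs. destruct (Hline s Hs) as [Hex Hc].
    assert (Hf : ex_derive (fun t => f (upd i r t)) s) by now apply ex_derive_upd.
    assert (Hl : ex_derive (fun t => c * t) s) by apply ex_derive_scal, ex_derive_id.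
    replace 0 with (Derive g s).
    - apply Derive_correct. exact (ex_derive_minus _ _ _ Hf Hl).
    - unfold g. rewrite Derive_minus, Derive_upd, Hc, Derive_scal, Derive_id by assumption. ring. }
  destruct (MVT_gen g (coord i r) t (fun _ => 0)) as [s [_ Hs]].
  - intros s Hs. apply Hg, Hseg. lra.
  - intros s Hs. apply continuity_pt_filterlim.
    exact (ex_derive_continuous g s (ex_intro _ 0 (Hg s (Hseg s Hs)))).
  - unfold g in Hs. rewrite upd_coord in Hs. lra.
Qed.

Lemma box_proj_invariant p e f k q : 0 < e ->
  (forall r, box p e r -> forall i, (i < 4)%nat -> k i = false ->
     ex_partial f i r /\ partial i f r = 0) ->
  box p e q -> f (proj k p q) = f q.
Proof.
  intros He Hf Hq.
  set (move i r := if k i then r else upd i r (coord i p)).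
  assert (Hmove : forall i r, (i < 4)%nat -> box p e r -> box p e (move i r) /\ f (move i r) = f r).
  { intros i r Hi Hr. unfold move. destruct (k i) eqn:Hki; [auto|]. split.
    - now apply box_upd_center.
    - rewrite (affine_on_line p e f i r 0 (coord i p)); [ring|auto|auto| |].
      + now rewrite Rminus_diag, Rabs_R0.
      + intros s Hs. apply Hf; [now apply box_upd | exact Hi | exact Hki]. }
  replace (proj k p q) with (move 3%nat (move 2%nat (move 1%nat (move 0%nat q)))).
  - destruct (Hmove 0%nat q ltac:(lia) Hq) as [B0 E0].
    destruct (Hmove 1%nat _ ltac:(lia) B0) as [B1 E1].
    destruct (Hmove 2%nat _ ltac:(lia) B1) as [B2 E2].
    destruct (Hmove 3%nat _ ltac:(lia) B2) as [_ E3].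
    congruence.
  - unfold move, proj. destruct_pt q.
    destruct (k 0%nat), (k 1%nat), (k 2%nat), (k 3%nat); reflexivity.
Qed.

Lemma affine_on_line_proj p e f k i r t : 0 < e -> k i = false -> (i < 4)%nat -> box p e r ->
  Rabs (t - coord i p) < e ->
  (forall r', box p e r' -> ex_partial f i r' /\ partial i f (proj k p r') = partial i f r') ->
  f (upd i r t) = f r + partial i f (proj k p r) * (t - coord i r).
Proof.
  intros He Hki Hi Hr Ht Hslope. apply (affine_on_line p e); auto.
  intros s Hs. destruct (Hslope (upd i r s)) as [Hex Hsl]; [now apply box_upd|].
  split; [exact Hex|]. now rewrite <- Hsl, proj_upd, Hki.
Qed.

Definition prwave_Gam (F : pt -> R) (l i j : nat) (p : pt) : R :=
  match l, i, j with
  | 0%nat, 1%nat, 1%nat => /2 * (F p * partial 0 F p + partial 1 F p)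
  | 0%nat, 0%nat, 1%nat | 0%nat, 1%nat, 0%nat => /2 * partial 0 F p
  | 0%nat, 1%nat, 2%nat | 0%nat, 2%nat, 1%nat => /2 * partial 2 F p
  | 0%nat, 1%nat, 3%nat | 0%nat, 3%nat, 1%nat => /2 * partial 3 F p
  | 1%nat, 1%nat, 1%nat => - /2 * partial 0 F p
  | 2%nat, 1%nat, 1%nat => - /2 * partial 2 F p
  | 3%nat, 1%nat, 1%nat => - /2 * partial 3 F p
  | _, _, _ => 0 end.

Lemma Gam_prwave F l i j p : (l < 4)%nat -> (i < 4)%nat -> (j < 4)%nat ->
  Gam (prwave F) (prwave_inv F) l i j p = prwave_Gam F l i j p.
Proof.
  intros; unfold Gam, sum4, prwave_Gam, prwave, prwave_inv.
  case_index l; case_index i; case_index j; cbv beta iota; rewrite ?partial_const;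
  change (fun q : pt => F q) with F; ring.
Qed.

Definition prwave_dGam (F : pt -> R) (i l j k : nat) (p : pt) : R :=
  match l, j, k with
  | 0%nat, 1%nat, 1%nat => /2 * (partial i F p * partial 0 F p + F p * partial i (partial 0 F) p
                                 + partial i (partial 1 F) p)
  | 0%nat, 0%nat, 1%nat | 0%nat, 1%nat, 0%nat => /2 * partial i (partial 0 F) p
  | 0%nat, 1%nat, 2%nat | 0%nat, 2%nat, 1%nat => /2 * partial i (partial 2 F) p
  | 0%nat, 1%nat, 3%nat | 0%nat, 3%nat, 1%nat => /2 * partial i (partial 3 F) p
  | 1%nat, 1%nat, 1%nat => - /2 * partial i (partial 0 F) p
  | 2%nat, 1%nat, 1%nat => - /2 * partial i (partial 2 F) p
  | 3%nat, 1%nat, 1%nat => - /2 * partial i (partial 3 F) p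
  | _, _, _ => 0 end.

Definition prwave_differentiable (F : pt -> R) (p : pt) : Prop :=
  forall i, (i < 4)%nat ->
    ex_partial F i p /\ ex_partial (partial 0 F) i p /\ ex_partial (partial 1 F) i p.

Lemma smooth_prwave_differentiable (U : pt -> Prop) F p : smooth_on U F -> U p ->
  prwave_differentiable F p.
Proof.
  intros HF Hp i Hi.
  split; [|split]; apply (smooth_ex_partial U); auto; apply smooth_partial; auto; lia.
Qed.

Lemma partial_prwave_Gam F i l j k p : (l < 4)%nat -> (j < 4)%nat -> (k < 4)%nat ->
  (i < 4)%nat -> prwave_differentiable F p ->
  partial i (Gam (prwave F) (prwave_inv F) l j k) p = prwave_dGam F i l j k p.
Proof.
  intros Hl Hj Hk Hi HF. destruct (HF i Hi) as [HF0 [HFu HFv]].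
  rewrite (partial_ext _ (prwave_Gam F l j k)) by (intros; now apply Gam_prwave).
  unfold prwave_Gam, prwave_dGam.
  case_index l; case_index j; case_index k; try apply partial_const; try apply partial_scal.
  rewrite partial_scal, partial_plus, partial_mult; auto. now apply ex_partial_mult.
Qed.

Lemma Riem_prwave F p l i j k : prwave_differentiable F p ->
  (l < 4)%nat -> (i < 4)%nat -> (j < 4)%nat -> (k < 4)%nat ->
  Riem (prwave F) (prwave_inv F) l i j k p =
  prwave_dGam F i l j k p - prwave_dGam F j l i k p +
  sum4 (fun m => prwave_Gam F l i m p * prwave_Gam F m j k p
                 - prwave_Gam F l j m p * prwave_Gam F m i k p).
Proof.
  intros HF Hl Hi Hj Hk. unfold Riem.
  rewrite !partial_prwave_Gam by assumption.
  unfold sum4. rewrite !Gam_prwave by lia. reflexivity.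
Qed.

Definition prwave_ricci (F : pt -> R) (p : pt) (j k : nat) : R :=
  sum4 (fun i => prwave_dGam F i i j k p - prwave_dGam F j i i k p +
    sum4 (fun m => prwave_Gam F i i m p * prwave_Gam F m j k p
                   - prwave_Gam F i j m p * prwave_Gam F m i k p)).

Lemma ricci_prwave F p j k : prwave_differentiable F p -> (j < 4)%nat -> (k < 4)%nat ->
  ricci (prwave F) (prwave_inv F) j k p = prwave_ricci F p j k.
Proof.
  intros. unfold ricci, prwave_ricci, sum4. rewrite !Riem_prwave by (auto; lia). reflexivity.
Qed.

Definition prwave_hess (F h : pt -> R) (p : pt) (i j : nat) : R :=
  partial i (partial j h) p - sum4 (fun k => prwave_Gam F k i j p * partial k h p).

Definition prwave_weinstein (F h : pt -> R) (p : pt) (i j : nat) : R :=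
  h p * prwave_ricci F p i j - prwave_hess F h p i j
  + sum4 (fun k => sum4 (fun l => prwave_inv F k l p * prwave_hess F h p k l)) * prwave F i j p.

Lemma hess_prwave F h p i j : (i < 4)%nat -> (j < 4)%nat ->
  hess (prwave F) (prwave_inv F) h i j p = prwave_hess F h p i j.
Proof. intros. unfold hess, prwave_hess, sum4. rewrite !Gam_prwave by lia. reflexivity. Qed.

Lemma weinstein_prwave F h p i j : prwave_differentiable F p -> (i < 4)%nat -> (j < 4)%nat ->
  weinstein (prwave F) (prwave_inv F) h i j p = prwave_weinstein F h p i j.
Proof.
  intros. unfold weinstein, prwave_weinstein, lap, sum4.
  rewrite !hess_prwave by lia. rewrite ricci_prwave by assumption. reflexivity.
Qed.

Lemma prwave_flat (V : pt -> Prop) F : is_open V -> smooth_on V F ->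
  (forall q i j, V q -> (i < 4)%nat -> (j < 4)%nat -> i <> 1%nat -> j <> 1%nat ->
     partial i (partial j F) q = 0) ->
  flat_on (prwave F) (prwave_inv F) V.
Proof.
  intros HV HF Hdd q Hq l i j k Hl Hi Hj Hk.
  assert (Hcomm : forall a b, (a < 4)%nat -> (b < 4)%nat ->
            partial a (partial b F) q = partial b (partial a F) q)
    by (intros; now apply (partial_comm V)).
  rewrite Riem_prwave by (auto; now apply (smooth_prwave_differentiable V)).
  unfold prwave_dGam, prwave_Gam, sum4.
  case_index l; case_index i; case_index j; case_index k; cbv beta iota;
  rewrite ?(Hcomm 1%nat 0%nat), ?(Hcomm 2%nat 1%nat), ?(Hcomm 3%nat 1%nat) by lia;
  rewrite ?(Hdd q 0%nat 0%nat), ?(Hdd q 0%nat 2%nat), ?(Hdd q 2%nat 0%nat), ?(Hdd q 0%nat 3%nat),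
    ?(Hdd q 3%nat 0%nat), ?(Hdd q 2%nat 2%nat), ?(Hdd q 2%nat 3%nat), ?(Hdd q 3%nat 2%nat),
    ?(Hdd q 3%nat 3%nat) by (auto; lia); field.
Qed.

Lemma ricci_op_prwave_eq0 F p i j : prwave_differentiable F p -> partial 0 (partial 0 F) p = 0 ->
  (i < 4)%nat -> (j < 4)%nat -> (i = 1 \/ j = 0 \/ (2 <= i /\ 2 <= j))%nat ->
  ricci_op (prwave F) (prwave_inv F) i j p = 0.
Proof.
  intros HF HFuu Hi Hj Hij.
  unfold ricci_op, sum4. rewrite !ricci_prwave by (auto; lia).
  unfold prwave_ricci, prwave_dGam, prwave_Gam, sum4, prwave_inv.
  case_index i; case_index j; try lia; cbv beta iota; rewrite ?HFuu; field.
Qed.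

(* Such a matrix maps d_v into span(d_u, d_x, d_y), d_x and d_y into span(d_u), and d_u to 0. *)
Lemma nilpotent_of_zero_pattern (A : mat) :
  (forall i j, (i < 4)%nat -> (j < 4)%nat -> (i = 1 \/ j = 0 \/ (2 <= i /\ 2 <= j))%nat ->
     A i j = 0) ->
  nilpotent A.
Proof.
  intros HA. exists 3%nat. intros i j Hi Hj. unfold mpow, mmul, sum4.
  case_index i; case_index j; cbv beta iota; simpl Nat.eqb; cbv beta iota;
  rewrite ?(HA 0%nat 0%nat), ?(HA 1%nat 0%nat), ?(HA 1%nat 1%nat), ?(HA 1%nat 2%nat),
    ?(HA 1%nat 3%nat), ?(HA 2%nat 0%nat), ?(HA 3%nat 0%nat), ?(HA 2%nat 2%nat),
    ?(HA 2%nat 3%nat), ?(HA 3%nat 2%nat), ?(HA 3%nat 3%nat) by lia; ring.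
Qed.

Section VacuumPrWave.

Variables (U : pt -> Prop) (F h : pt -> R).
Hypothesis U_open : is_open U.
Hypothesis F_smooth : smooth_on U F.
Hypothesis h_smooth : smooth_on U h.
Hypothesis h_pos : forall p, U p -> 0 < h p.
Hypothesis vacuum : forall p, U p -> forall i j, (i < 4)%nat -> (j < 4)%nat ->
  weinstein (prwave F) (prwave_inv F) h i j p = 0.
Hypothesis nonflat : forall V : pt -> Prop, is_open V -> (exists p, V p) ->
  (forall p, V p -> U p) -> ~ flat_on (prwave F) (prwave_inv F) V.

Ltac smooth_partials :=
  repeat match goal with |- smooth_on _ (partial _ _) => apply smooth_partial; [|lia] end;
  assumption.

Ltac smooth_ex_partial := apply (smooth_ex_partial U); [smooth_partials | assumption | lia].

Ltac smooth_side := first [lia | assumption | smooth_partials].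

Lemma vacuum_prwave p i j : U p -> (i < 4)%nat -> (j < 4)%nat ->
  prwave_weinstein F h p i j = 0.
Proof.
  intros Hp Hi Hj.
  rewrite <- weinstein_prwave by (auto; now apply (smooth_prwave_differentiable U)).
  now apply vacuum.
Qed.

Ltac vacuum_component Hp i j :=
  let W := fresh "W" in
  pose proof (vacuum_prwave _ i j Hp ltac:(lia) ltac:(lia)) as W;
  unfold prwave_weinstein, prwave_hess, prwave_ricci, prwave_dGam, prwave_Gam, sum4,
    prwave, prwave_inv in W; simpl in W.

Lemma h_hess_offdiag p i j : U p -> (i < 4)%nat -> (j < 4)%nat -> i <> 1%nat -> j <> 1%nat ->
  (i = 0 \/ i <> j)%nat -> partial i (partial j h) p = 0.
Proof.
  intros Hp Hi Hj Hi1 Hj1 Hij. vacuum_component Hp i j.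
  case_index i; case_index j; simpl in W; lra.
Qed.

Lemma h_hess_xy_diag p k : U p -> (k = 2 \/ k = 3)%nat ->
  partial k (partial k h) p = partial 0 F p * partial 0 h p - 2 * partial 1 (partial 0 h) p.
Proof.
  intros Hp Hk.
  assert (Huu : partial 0 (partial 0 h) p = 0) by (apply h_hess_offdiag; auto; lia).
  vacuum_component Hp 0%nat 1%nat. vacuum_component Hp 1%nat 0%nat.
  vacuum_component Hp 2%nat 2%nat. vacuum_component Hp 3%nat 3%nat.
  rewrite Huu in *. destruct Hk as [-> | ->]; lra.
Qed.

Lemma h_mul_F_uu p : U p ->
  h p * partial 0 (partial 0 F) p
  = 6 * partial 1 (partial 0 h) p - 3 * partial 0 F p * partial 0 h p.
Proof.
  intros Hp.
  assert (Huu : partial 0 (partial 0 h) p = 0) by (apply h_hess_offdiag; auto; lia).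
  vacuum_component Hp 0%nat 1%nat. vacuum_component Hp 1%nat 0%nat.
  vacuum_component Hp 2%nat 2%nat. vacuum_component Hp 3%nat 3%nat.
  rewrite Huu in *. lra.
Qed.

Lemma h_hess_v_xy p k : U p -> (k = 2 \/ k = 3)%nat ->
  partial 1 (partial k h) p
  = /2 * (h p * partial 0 (partial k F) p + partial k F p * partial 0 h p).
Proof.
  intros Hp Hk. vacuum_component Hp 1%nat 2%nat. vacuum_component Hp 1%nat 3%nat.
  destruct Hk as [-> | ->]; lra.
Qed.

Lemma F_uu_mul_h_u_eq0 p : U p -> partial 0 (partial 0 F) p * partial 0 h p = 0.
Proof.
  intros Hp.
  assert (E := partial_ext_open U _ _ 0 p U_open Hp ltac:(lia)
                 (fun q Hq => h_hess_xy_diag q 2 Hq ltac:(lia))).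
  rewrite (partial_comm U (partial 2 h) 0 2 p) in E by smooth_side.
  rewrite (partial_eq0_open U (partial 0 (partial 2 h)) 2 p) in E
    by (auto; intros q Hq; apply h_hess_offdiag; auto; lia).
  rewrite partial_minus, partial_mult, partial_scal in E;
    [| smooth_ex_partial | smooth_ex_partial
     | apply ex_partial_mult; smooth_ex_partial | apply ex_partial_scal; smooth_ex_partial].
  rewrite (partial_comm U (partial 0 h) 0 1 p) in E by smooth_side.
  rewrite (partial_eq0_open U (partial 0 (partial 0 h)) 1 p) in E
    by (auto; intros q Hq; apply h_hess_offdiag; auto; lia).
  rewrite (h_hess_offdiag p 0 0) in E by (auto; lia). lra.
Qed.

Lemma F_uu_eq0 p : U p -> partial 0 (partial 0 F) p = 0.
Proof.
  intros Hp. destruct (Req_dec (partial 0 (partial 0 F) p) 0) as [|HFuu]; [assumption|exfalso].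
  destruct (nonzero_box U _ p U_open Hp
           (smooth_cont U (partial 0 (partial 0 F)) p ltac:(smooth_partials) Hp) HFuu)
    as [e [He HB]].
  assert (Hhu : forall q, box p e q -> partial 0 h q = 0).
  { intros q Hq. destruct (HB q Hq) as [HUq HFq].
    destruct (Rmult_integral _ _ (F_uu_mul_h_u_eq0 q HUq)); [contradiction | assumption]. }
  assert (Hhvu : partial 1 (partial 0 h) p = 0)
    by (apply (partial_eq0_open (box p e)); auto using box_open, box_center; lia).
  pose proof (h_mul_F_uu p Hp) as E. rewrite Hhvu, (Hhu p (box_center p e He)) in E.
  destruct (Rmult_integral (h p) (partial 0 (partial 0 F) p)) as [Hh|]; [lra| |contradiction].
  specialize (h_pos p Hp). lra.
Qed.

Lemma h_hess_vu p : U p -> partial 1 (partial 0 h) p = /2 * (partial 0 F p * partial 0 h p).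
Proof. intros Hp. pose proof (h_mul_F_uu p Hp) as E. rewrite F_uu_eq0 in E by exact Hp. lra. Qed.

Lemma h_hess_uxy_eq0 p i j : U p -> (i < 4)%nat -> (j < 4)%nat -> i <> 1%nat -> j <> 1%nat ->
  partial i (partial j h) p = 0.
Proof.
  intros Hp Hi Hj Hi1 Hj1.
  destruct (Nat.eq_dec i 0) as [Hi0|Hi0]; [apply h_hess_offdiag; auto; lia|].
  destruct (Nat.eq_dec i j) as [<-|Hij]; [|apply h_hess_offdiag; auto; lia].
  rewrite h_hess_xy_diag, h_hess_vu by (auto; lia). field.
Qed.

Lemma F_hess_u_xy_eq0 q k : U q -> partial 0 h q <> 0 -> (k = 2 \/ k = 3)%nat ->
  partial k (partial 0 F) q = 0.
Proof.
  intros Hq Hhu Hk.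
  assert (E := partial_scal_mult_open U (/2) _ _ _ k q U_open Hq ltac:(lia) h_hess_vu
                 ltac:(smooth_ex_partial) ltac:(smooth_ex_partial)).
  rewrite (partial_comm U (partial 0 h) k 1 q) in E by smooth_side.
  rewrite (partial_eq0_open U (partial k (partial 0 h)) 1 q) in E
    by (auto; intros r Hr; apply h_hess_uxy_eq0; auto; lia).
  rewrite (h_hess_uxy_eq0 q k 0) in E by (auto; lia).
  assert (P : partial k (partial 0 F) q * partial 0 h q = 0) by lra.
  destruct (Rmult_integral _ _ P); [assumption | contradiction].
Qed.

Lemma F_hess_xy_eq0_on (W : pt -> Prop) q m k : is_open W -> (forall r, W r -> U r) ->
  (forall r, W r -> partial 0 h r <> 0) -> W q -> (m = 2 \/ m = 3)%nat -> (k = 2 \/ k = 3)%nat ->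
  partial m (partial k F) q = 0.
Proof.
  intros HW HWU Hhu Hq Hm Hk. assert (HUq := HWU q Hq).
  assert (Hvk : forall r, W r -> partial 1 (partial k h) r = /2 * (partial k F r * partial 0 h r)).
  { intros r Hr. assert (HUr := HWU r Hr).
    rewrite h_hess_v_xy, (partial_comm U F 0 k r), F_hess_u_xy_eq0 by (auto; smooth_side). ring. }
  assert (E := partial_scal_mult_open W (/2) _ _ _ m q HW Hq ltac:(lia) Hvk
                 ltac:(smooth_ex_partial) ltac:(smooth_ex_partial)).
  rewrite (partial_comm U (partial k h) m 1 q) in E by smooth_side.
  rewrite (partial_eq0_open U (partial m (partial k h)) 1 q) in E
    by (auto; intros r Hr; apply h_hess_uxy_eq0; auto; lia).
  rewrite (h_hess_uxy_eq0 q m 0) in E by (auto; lia).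
  assert (P : partial m (partial k F) q * partial 0 h q = 0) by lra.
  destruct (Rmult_integral _ _ P); [assumption | now exfalso; apply (Hhu q Hq)].
Qed.

Lemma F_hess_uxy_eq0_on (W : pt -> Prop) : is_open W -> (forall r, W r -> U r) ->
  (forall r, W r -> partial 0 h r <> 0) ->
  forall q i j, W q -> (i < 4)%nat -> (j < 4)%nat -> i <> 1%nat -> j <> 1%nat ->
  partial i (partial j F) q = 0.
Proof.
  intros HW HWU Hhu q i j Hq Hi Hj Hi1 Hj1. assert (HUq := HWU q Hq).
  destruct (Nat.eq_dec j 0) as [->|Hj0].
  - destruct (Nat.eq_dec i 0) as [->|Hi0]; [now apply F_uu_eq0 | apply F_hess_u_xy_eq0; auto; lia].
  - destruct (Nat.eq_dec i 0) as [->|Hi0].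
    + rewrite (partial_comm U F 0 j q) by smooth_side. apply F_hess_u_xy_eq0; auto; lia.
    + apply (F_hess_xy_eq0_on W); auto; lia.
Qed.

Lemma h_u_eq0 p : U p -> partial 0 h p = 0.
Proof.
  intros Hp. destruct (Req_dec (partial 0 h p) 0) as [|Hhu]; [assumption|exfalso].
  destruct (nonzero_box U _ p U_open Hp
              (smooth_cont U (partial 0 h) p ltac:(smooth_partials) Hp) Hhu)
    as [e [He HB]].
  apply (nonflat (box p e) (box_open p e)).
  - exists p. now apply box_center.
  - intros q Hq. apply HB, Hq.
  - apply prwave_flat; [apply box_open | |].
    + apply (smooth_mono U); [intros q Hq; apply HB, Hq | exact F_smooth].
    + apply (F_hess_uxy_eq0_on (box p e)); [apply box_open | intros q Hq; apply HB, Hq ..].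
Qed.

Lemma ricci_op_nilpotent p : U p -> nilpotent (fun i j => ricci_op (prwave F) (prwave_inv F) i j p).
Proof.
  intros Hp. apply nilpotent_of_zero_pattern. intros i j Hi Hj Hij.
  apply ricci_op_prwave_eq0; auto.
  - now apply (smooth_prwave_differentiable U).
  - now apply F_uu_eq0.
Qed.

Lemma h_affine_xy p e q : 0 < e -> (forall r, box p e r -> U r) -> box p e q ->
  h q = partial 2 h (proj only_v p q) * coord 2 q + partial 3 h (proj only_v p q) * coord 3 q
        + (h (proj only_v p q) + - coord 2 p * partial 2 h (proj only_v p q)
           + - coord 3 p * partial 3 h (proj only_v p q)).
Proof.
  intros He HBU Hq.
  assert (Hslope : forall k, (k = 2 \/ k = 3)%nat -> forall r, box p e r ->
            ex_partial h k r /\ partial k h (proj only_v p r) = partial k h r).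
  { intros k Hk r Hr. assert (HUr := HBU r Hr). split; [smooth_ex_partial|].
    apply (box_proj_invariant p e); auto. intros r' Hr' i Hi Hvi. assert (HUr' := HBU r' Hr').
    apply Nat.eqb_neq in Hvi. split; [smooth_ex_partial | apply h_hess_uxy_eq0; auto; lia]. }
  assert (Hu : h (proj all_but_u p q) = h q).
  { apply (box_proj_invariant p e); auto. intros r Hr i Hi Hui. assert (HUr := HBU r Hr).
    destruct i as [|i]; [|discriminate Hui]. split; [smooth_ex_partial | now apply h_u_eq0]. }
  assert (Bx := box_upd_center p e _ 2 He (box_proj all_but_u p e q He Hq) ltac:(lia)).
  assert (By := box_upd_center p e _ 3 He Bx ltac:(lia)).
  assert (Ex := affine_on_line_proj p e h only_v 2 _ (coord 2 q) He eq_refl ltac:(lia) Bx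
                  (Hq 2%nat ltac:(lia)) (Hslope 2%nat ltac:(lia))).
  assert (Ey := affine_on_line_proj p e h only_v 3 _ (coord 3 q) He eq_refl ltac:(lia) By
                  (Hq 3%nat ltac:(lia)) (Hslope 3%nat ltac:(lia))).
  destruct_pt p; destruct_pt q. unfold proj, only_v, all_but_u in *. simpl in *.
  rewrite <- Hu, Ex, Ey. ring.
Qed.

Lemma F_affine_u p e q : 0 < e -> (forall r, box p e r -> U r) -> box p e q ->
  F q = partial 0 F (proj all_but_u p q) * coord 0 q
        + (F (proj all_but_u p q) + - coord 0 p * partial 0 F (proj all_but_u p q)).
Proof.
  intros He HBU Hq.
  assert (Hslope : forall r, box p e r ->
            ex_partial F 0 r /\ partial 0 F (proj all_but_u p r) = partial 0 F r).
  { intros r Hr. assert (HUr := HBU r Hr). split; [smooth_ex_partial|].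
    apply (box_proj_invariant p e); auto. intros r' Hr' i Hi Hui. assert (HUr' := HBU r' Hr').
    destruct i as [|i]; [|discriminate Hui]. split; [smooth_ex_partial | now apply F_uu_eq0]. }
  assert (Eu := affine_on_line_proj p e F all_but_u 0 _ (coord 0 q) He eq_refl ltac:(lia)
                  (box_proj all_but_u p e q He Hq) (Hq 0%nat ltac:(lia)) Hslope).
  destruct_pt p; destruct_pt q. unfold proj, all_but_u in *. simpl in *. rewrite Eu. ring.
Qed.

End VacuumPrWave.

Theorem lemma3p2 (U : pt -> Prop) (F h : pt -> R) :
  is_open U ->
  smooth_on U F ->
  smooth_on U h ->
  (forall p, U p -> 0 < h p) ->
  (* h is not constant on any nonempty open subset *)
  (forall V : pt -> Prop, is_open V -> (exists p, V p) -> (forall p, V p -> U p) ->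
     ~ (exists c, forall p, V p -> h p = c)) ->
  (* (M,g) is non-flat: the curvature does not vanish identically on any nonempty open subset *)
  (forall V : pt -> Prop, is_open V -> (exists p, V p) -> (forall p, V p -> U p) ->
     ~ flat_on (prwave F) (prwave_inv F) V) ->
  (* vacuum weighted Einstein field equations G^h = 0 *)
  (forall p, U p -> forall i j, (i < 4)%nat -> (j < 4)%nat ->
     weinstein (prwave F) (prwave_inv F) h i j p = 0) ->
  (forall p, U p -> nilpotent (fun i j => ricci_op (prwave F) (prwave_inv F) i j p)) /\
  (forall p, U p -> exists eps, 0 < eps /\ (forall q, box p eps q -> U q) /\
     exists (hx hy h0 : R -> R) (F1 F0 : R -> R -> R -> R),
       smooth_on (box p eps) (fun q => hx (coord 1 q)) /\
       smooth_on (box p eps) (fun q => hy (coord 1 q)) /\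
       smooth_on (box p eps) (fun q => h0 (coord 1 q)) /\
       smooth_on (box p eps) (fun q => F1 (coord 1 q) (coord 2 q) (coord 3 q)) /\
       smooth_on (box p eps) (fun q => F0 (coord 1 q) (coord 2 q) (coord 3 q)) /\
       forall q, box p eps q ->
         h q = hx (coord 1 q) * coord 2 q + hy (coord 1 q) * coord 3 q + h0 (coord 1 q) /\
         F q = F1 (coord 1 q) (coord 2 q) (coord 3 q) * coord 0 q
               + F0 (coord 1 q) (coord 2 q) (coord 3 q)).
Proof.
  intros HU HF Hh Hpos _ Hnonflat Hvac. split.
  - intros p Hp. exact (ricci_op_nilpotent U F h HU HF Hh Hpos Hvac p Hp).
  - intros p Hp. destruct (HU p Hp) as [e [He HeU]].
    exists e. split; [exact He|]. split; [exact HeU|].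
    set (v_slice (f : pt -> R) (v : R) := f (coord 0 p, v, coord 2 p, coord 3 p)).
    set (u_slice (f : pt -> R) (v x y : R) := f (coord 0 p, v, x, y)).
    exists (v_slice (partial 2 h)), (v_slice (partial 3 h)),
      (fun v => v_slice h v + - coord 2 p * v_slice (partial 2 h) v
                + - coord 3 p * v_slice (partial 3 h) v),
      (u_slice (partial 0 F)),
      (fun v x y => u_slice F v x y + - coord 0 p * u_slice (partial 0 F) v x y).
    assert (Hslice : forall f k, smooth_on U f -> smooth_on (box p e) (fun q => f (proj k p q)))
      by (intros f k Hf; apply (smooth_proj U); auto; intros q Hq; apply HeU, box_proj; auto).
    assert (HhU : forall k, (k < 4)%nat -> smooth_on U (partial k h))
      by (intros; now apply smooth_partial).
    split; [|split; [|split; [|split; [|split]]]]; [..| intros q Hq; split].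
    + apply (Hslice _ only_v), HhU; lia.
    + apply (Hslice _ only_v), HhU; lia.
    + repeat apply smooth_plus; try apply smooth_scal; try apply box_open;
        apply (Hslice _ only_v); auto; apply HhU; lia.
    + apply (Hslice _ all_but_u), smooth_partial; auto; lia.
    + apply smooth_plus; try apply smooth_scal; try apply box_open;
        apply (Hslice _ all_but_u); auto; apply smooth_partial; auto; lia.
    + now apply (h_affine_xy U F h HU HF Hh Hpos Hvac Hnonflat p e q).
    + now apply (F_affine_u U F h HU HF Hh Hpos Hvac p e q).
Qed.
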